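(* Let $d\ge 1$ and for $n\in\mathbb{N}_0$ put $r_n=\binom{n+d-1}{n}$. Let $w$ be a nonnegative weight function with finite moments on a domain $\Omega\subset\mathbb{R}^d$, and let $(\mathbb{P}_n)_{n\ge0}$ be a family of vectors of polynomials $\mathbb{P}_n=(P_{n,1},\dots,P_{n,r_n})^T$ in $x=(x_1,\dots,x_d)$ forming a system of orthogonal polynomials with respect to $w$, i.e. the entries of $\mathbb{P}_n$ are polynomials of total degree $n$ which, together with all polynomials of degree $<n$, span the polynomials of degree $\le n$, and $$\int_\Omega \mathbb{P}_i(x)\mathbb{P}_j^T(x)w(x)\,dx=\mathbf 0_{r_i\times r_j}\ (i\neq j),\qquad \int_\Omega \mathbb{P}_j(x)\mathbb{P}_j^T(x)w(x)\,dx=\Pi_j^{-1},$$ with $\Pi_j$ an invertible $r_j\times r_j$ matrix. Suppose the three-term recurrence relations $$x_i\mathbb{P}_n(x)=A_{n,i}\mathbb{P}_{n+1}(x)+B_{n,i}\mathbb{P}_n(x)+C_{n,i}\mathbb{P}_{n-1}(x),\quad n\ge0,\ i=1,\dots,d,\ \mathbb{P}_{-1}=0,$$ hold, with $A_{n,i}$ of size $r_n\times r_{n+1}$, $B_{n,i}$ of size $r_n\times r_n$, $C_{n,i}$ of size $r_n\times r_{n-1}$. For $n\ge1$ let $C_n^T$ denote the $dr_{n-1}\times r_n$ matrix obtained by stacking $C_{n,1}^T,\dots,C_{n,d}^T$ vertically (i.e. $C_n^T=(C_{n,1}\ \cdots\ C_{n,d})^T$), and let $G_n=(G_{n,1}\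 \cdots\ G_{n,d})$, with each $G_{n,i}$ of size $r_n\times r_{n-1}$, be any generalized (left) inverse of $C_n^T$, i.e. $G_nC_n^T=\sum_{i=1}^d G_{n,i}C_{n,i}^T=I_{r_n}$. Then for every $n\ge1$, $$\Pi_n=\Pi_0\sum_{i_1,\dots,i_n\in\{1,\dots,d\}}G_{n,i_1}G_{n-1,i_2}\cdots G_{1,i_n}A_{0,i_n}A_{1,i_{n-1}}\cdots A_{n-1,i_1},$$ and this expression does not depend on the choice of the generalized inverses $G_1,\dots,G_n$.
   Context: Here $\Pi_0$ is a scalar since $r_0=1$. The joint matrix $C_n^T$ has full rank $r_n$, so left inverses exist. In the paper's setting the relations $\Pi_{n-1}A_{n-1,i}=C_{n,i}^T\Pi_n$ hold for all $n\ge1$ and $i=1,\dots,d$ (they follow from the orthogonality and the recurrence relations). *)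

From HB Require Import structures.
From mathcomp Require Import all_boot all_order all_algebra.
From mathcomp Require Import mpoly.
From mathcomp Require Import all_classical all_reals all_analysis.

Set Implicit Arguments.
Unset Strict Implicit.
Unset Printing Implicit Defensive.

Import Order.TTheory GRing.Theory Num.Theory.
Local Open Scope ring_scope.
Local Open Scope classical_set_scope.

(* r_n = binom(n+d-1, n): number of (linearly independent) orthogonal
   polynomials of exact total degree n in d variables. *)
Definition rdim (d n : nat) : nat := 'C(n + d - 1, n).

Lemma rdim0_gt0 d : (0 < rdim d 0)%N.
Proof. by rewrite /rdim bin0. Qed.

(* the unique index of the 1 x 1 matrices of level 0 *)
Definition ord_r0 (d : nat) : 'I_(rdim d 0) := Ordinal (rdim0_gt0 d).


(* Lebesgue measure on R^d, characterized by its value on closed boxes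
   (this determines it uniquely on the Borel sets) *)
Definition is_lebesgue_measure (R : realType) (d : nat)
  (lam : {measure set (d.-tuple R) -> \bar R}) : Prop :=
  forall a b : d.-tuple R,
    lam [set x | forall i : 'I_d, tnth a i <= tnth x i <= tnth b i] =
    (\prod_(i < d) Num.max 0 (tnth b i - tnth a i))%:E.

Definition peval (R : realType) (d : nat) (x : d.-tuple R) (p : {mpoly R[d]}) : R :=
  meval (fun i => tnth x i) p.

Definition mxint (R : realType) (d : nat) (lam : {measure set (d.-tuple R) -> \bar R})
  (D : set (d.-tuple R)) (m k : nat) (F : d.-tuple R -> 'M[R]_(m, k)) : 'M[R]_(m, k) :=
  \matrix_(i, j) Rintegral lam D (fun x => F x i j).

Definition Pvec (R : realType) (d : nat) (P : forall n, 'I_(rdim d n) -> {mpoly R[d]})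
  (n : nat) (x : d.-tuple R) : 'cV[R]_(rdim d n) :=
  \col_j peval x (P n j).

Definition Pvec_prev (R : realType) (d : nat) (P : forall n, 'I_(rdim d n) -> {mpoly R[d]})
  (n : nat) (x : d.-tuple R) : 'cV[R]_(rdim d n.-1) :=
  if n is n'.+1 then Pvec P n' x else 0.

(* G_{n,i_1} G_{n-1,i_2} ... G_{1,i_n}  for t = (i_1, ..., i_n) *)
Fixpoint Gchain (R : realType) (d : nat)
  (G : forall n, 'I_d -> 'M[R]_(rdim d n, rdim d n.-1)) (n : nat) :
  n.-tuple 'I_d -> 'M[R]_(rdim d n, rdim d 0) :=
  match n with
  | 0 => fun _ => 1%:M
  | n'.+1 => fun t => G n'.+1 (thead t) *m Gchain G (behead_tuple t)
  end.

(* A_{0,i_n} A_{1,i_{n-1}} ... A_{n-1,i_1}  for t = (i_1, ..., i_n) *)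
Fixpoint Achain (R : realType) (d : nat)
  (A : forall n, 'I_d -> 'M[R]_(rdim d n, rdim d n.+1)) (n : nat) :
  n.-tuple 'I_d -> 'M[R]_(rdim d 0, rdim d n) :=
  match n with
  | 0 => fun _ => 1%:M
  | n'.+1 => fun t => Achain A (behead_tuple t) *m A n' (thead t)
  end.

Definition GAsum (R : realType) (d : nat)
  (G : forall n, 'I_d -> 'M[R]_(rdim d n, rdim d n.-1))
  (A : forall n, 'I_d -> 'M[R]_(rdim d n, rdim d n.+1)) (n : nat) : 'M[R]_(rdim d n) :=
  \sum_(t : n.-tuple 'I_d) Gchain G t *m Achain A t.

Definition left_inverses (R : realType) (d : nat)
  (C G : forall n, 'I_d -> 'M[R]_(rdim d n, rdim d n.-1)) : Prop :=
  forall n : nat, (0 < n)%N -> \sum_(i < d) G n i *m (C n i)^T = 1%:M.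

From HB Require Import structures.
From mathcomp Require Import all_boot all_order all_algebra.
From mathcomp Require Import mpoly.
From mathcomp Require Import all_classical all_reals all_analysis.
From Stdlib Require Import Lia.

(* Integrating x_i P_n P_{n+1}^T w with the recurrence for x_i P_n, orthogonality
   leaves A_{n,i} Pi_{n+1}^-1; integrating the transpose x_i P_{n+1} P_n^T w with
   the recurrence for x_i P_{n+1} leaves C_{n+1,i} Pi_n^-1.  As Pi_n^-1 is
   symmetric, Pi_n A_{n,i} = C_{n+1,i}^T Pi_{n+1}.  Multiplying on the left by
   G_{n+1,i} and summing over i gives Pi_{n+1} = sum_i G_{n+1,i} Pi_n A_{n,i},
   which unfolds from the scalar Pi_0 to the formula.  Its left-hand side does not
   involve G and Pi_0 is a nonzero scalar, so the sum does not depend on G. *)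

Import Order.TTheory GRing.Theory Num.Theory.
Local Open Scope ring_scope.
Local Open Scope classical_set_scope.

Section RealIntegral.
Context {dT} {T : measurableType dT} {R : realType} {mu : {measure set T -> \bar R}}.
Context {D : set T} (mD : measurable D).

Lemma integrableZl_EFin (k : R) {f : T -> R} :
  mu.-integrable D (EFin \o f) -> mu.-integrable D (EFin \o fun x => k * f x).
Proof. by move=> hf; apply: (eq_integrable mD _ _ _ (integrableZl mD k hf)). Qed.

Lemma integrableD_EFin {f g : T -> R} :
  mu.-integrable D (EFin \o f) -> mu.-integrable D (EFin \o g) ->
  mu.-integrable D (EFin \o fun x => f x + g x).
Proof. by move=> hf hg; apply: (eq_integrable mD _ _ _ (integrableD mD hf hg)). Qed.

Lemma integrable_sum_EFin I (s : seq I) (h : I -> T -> R) :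
  (forall i, mu.-integrable D (EFin \o h i)) ->
  mu.-integrable D (EFin \o fun x => \sum_(i <- s) h i x).
Proof.
move=> hh; elim: s => [|i s IHs].
  apply: (eq_integrable mD (cst 0)) => [x _|]; last exact: integrable0.
  by rewrite /= big_nil.
apply: (eq_integrable mD _ _ _ (integrableD_EFin (hh i) IHs)) => x _.
by rewrite /= big_cons.
Qed.

Lemma Rintegral_sum I (s : seq I) (h : I -> T -> R) :
  (forall i, mu.-integrable D (EFin \o h i)) ->
  \int[mu]_(x in D) (\sum_(i <- s) h i x) = \sum_(i <- s) \int[mu]_(x in D) h i x.
Proof.
move=> hh; elim: s => [|i s IHs].
  by under eq_Rintegral do rewrite big_nil; rewrite big_nil Rintegral_cst // mul0r.
under eq_Rintegral do rewrite big_cons.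
by rewrite big_cons RintegralD // ?IHs //; exact: integrable_sum_EFin.
Qed.

End RealIntegral.

Definition mx_integrable {R : realType} {d : nat}
    (lam : {measure set (d.-tuple R) -> \bar R}) (D : set (d.-tuple R))
    {m k} (F : d.-tuple R -> 'M[R]_(m, k)) : Prop :=
  forall i j, lam.-integrable D (EFin \o fun x => F x i j).

Section MatrixIntegral.
Context {R : realType} {d : nat} {lam : {measure set (d.-tuple R) -> \bar R}}.
Context {D : set (d.-tuple R)} (mD : measurable D).

Lemma mx_integrable_mull {m k l} (X : 'M[R]_(l, m)) {F : d.-tuple R -> 'M[R]_(m, k)} :
  mx_integrable lam D F -> mx_integrable lam D (fun x => X *m F x).
Proof.
move=> hF i j; under [fun x => _]funext do rewrite mxE.
by apply: integrable_sum_EFin => // a; exact: integrableZl_EFin.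
Qed.

Lemma mx_integrableD {m k} {F G : d.-tuple R -> 'M[R]_(m, k)} :
  mx_integrable lam D F -> mx_integrable lam D G ->
  mx_integrable lam D (fun x => F x + G x).
Proof.
move=> hF hG i j; under [fun x => _]funext do rewrite mxE.
exact: integrableD_EFin.
Qed.

Lemma mxint_mull {m k l} (X : 'M[R]_(l, m)) {F : d.-tuple R -> 'M[R]_(m, k)} :
  mx_integrable lam D F -> mxint lam D (fun x => X *m F x) = X *m mxint lam D F.
Proof.
move=> hF; apply/matrixP => i j; rewrite !mxE.
under eq_Rintegral do rewrite mxE.
rewrite Rintegral_sum // => [|a]; last exact: integrableZl_EFin.
by apply: eq_bigr => a _; rewrite RintegralZl // mxE.
Qed.

Lemma mxintD {m k} {F G : d.-tuple R -> 'M[R]_(m, k)} :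
  mx_integrable lam D F -> mx_integrable lam D G ->
  mxint lam D (fun x => F x + G x) = mxint lam D F + mxint lam D G.
Proof.
move=> hF hG; apply/matrixP => i j; rewrite !mxE.
by under eq_Rintegral do rewrite mxE; rewrite RintegralD.
Qed.

Lemma mxint_tr {m k} (F : d.-tuple R -> 'M[R]_(m, k)) :
  mxint lam D (fun x => (F x)^T) = (mxint lam D F)^T.
Proof. by apply/matrixP => i j; rewrite !mxE; under eq_Rintegral do rewrite mxE. Qed.

Lemma mx_integrable0 {m k} : mx_integrable lam D (fun _ => 0 : 'M[R]_(m, k)).
Proof.
move=> i j; apply: (eq_integrable mD (cst 0)) => [x _|]; last exact: integrable0.
by rewrite /= mxE.
Qed.

Lemma mxint0 {m k} : mxint lam D (fun _ => 0 : 'M[R]_(m, k)) = 0.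
Proof. by apply/matrixP => i j; rewrite !mxE Rintegral_cst // mul0r. Qed.

End MatrixIntegral.

Lemma behead_cons_tuple {T} {n} (x : T) (t : n.-tuple T) :
  behead_tuple [tuple of x :: t] = t.
Proof. exact: val_inj. Qed.

Lemma sum_tuple_cons (V : nmodType) (I : finType) n (F : n.+1.-tuple I -> V) :
  \sum_(t : n.+1.-tuple I) F t = \sum_(i : I) \sum_(t : n.-tuple I) F [tuple of i :: t].
Proof.
rewrite pair_big (reindex (fun p : I * n.-tuple I => [tuple of p.1 :: p.2])) //=.
exists (fun t : n.+1.-tuple I => (thead t, behead_tuple t)).
  by move=> [i t] _; rewrite /= theadE behead_cons_tuple.
by move=> t _; rewrite [RHS]tuple_eta.
Qed.

Section ChainSum.
Context {R : realType} {d : nat}.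
Context (G : forall n, 'I_d -> 'M[R]_(rdim d n, rdim d n.-1)).
Context (A : forall n, 'I_d -> 'M[R]_(rdim d n, rdim d n.+1)).

Lemma GAsum0 : GAsum G A 0 = 1%:M.
Proof.
rewrite /GAsum (eq_bigr (fun _ => 1%:M)) => [|t _]; last by rewrite mul1mx.
by rewrite sumr_const card_tuple expn0.
Qed.

Lemma GAsumS n : GAsum G A n.+1 = \sum_i G n.+1 i *m GAsum G A n *m A n i.
Proof.
rewrite /GAsum sum_tuple_cons; apply: eq_bigr => i _.
rewrite mulmx_sumr mulmx_suml; apply: eq_bigr => t _.
by rewrite /= theadE behead_cons_tuple !mulmxA.
Qed.

End ChainSum.

Lemma mx_rdim0_scalar {R : realType} {d} (M : 'M[R]_(rdim d 0)) :
  M = (M (ord_r0 d) (ord_r0 d))%:M.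
Proof.
have ord_r0_unique (i : 'I_(rdim d 0)) : i = ord_r0 d.
  by apply: val_inj; have := ltn_ord i; rewrite /= {2}/rdim bin0 ltnS leqn0 => /eqP.
apply/matrixP => i j; rewrite !mxE (ord_r0_unique i) (ord_r0_unique j) eqxx.
by rewrite mulr1n.
Qed.

Lemma unitmx_rdim0_entry_neq0 {R : realType} {d} (M : 'M[R]_(rdim d 0)) :
  M \in unitmx -> M (ord_r0 d) (ord_r0 d) != 0.
Proof.
by rewrite unitmxE [M in \det M]mx_rdim0_scalar det_scalar unitfE expf_eq0 rdim0_gt0.
Qed.

Lemma Pi_eq_scale_GAsum {R : realType} {d}
    {Pi : forall n, 'M[R]_(rdim d n)}
    {A : forall n, 'I_d -> 'M[R]_(rdim d n, rdim d n.+1)}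
    {C G : forall n, 'I_d -> 'M[R]_(rdim d n, rdim d n.-1)} :
  (forall n i, Pi n *m A n i = (C n.+1 i)^T *m Pi n.+1) ->
  left_inverses C G ->
  forall n, Pi n = Pi 0 (ord_r0 d) (ord_r0 d) *: GAsum G A n.
Proof.
move=> PiA hG; elim=> [|n IHn].
  by rewrite GAsum0 scalemx1 -mx_rdim0_scalar.
have -> : Pi n.+1 = \sum_i G n.+1 i *m Pi n *m A n i.
  rewrite -[Pi n.+1]mul1mx -(hG n.+1 isT) mulmx_suml.
  by apply: eq_bigr => i _; rewrite -!mulmxA PiA.
rewrite GAsumS scaler_sumr; apply: eq_bigr => i _.
by rewrite IHn -scalemxAr -scalemxAl.
Qed.

Section OrthogonalSystem.
Context {d : nat} {R : realType} {lam : {measure set (d.-tuple R) -> \bar R}}.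
Context {Omega : set (d.-tuple R)} (mOmega : measurable Omega) {w : d.-tuple R -> R}.
Hypothesis w_moments : forall m : 'I_d -> nat,
  lam.-integrable Omega (fun x => ((\prod_(i < d) tnth x i ^+ m i) * w x)%:E).
Context {P : forall n, 'I_(rdim d n) -> {mpoly R[d]}} {Pi : forall n, 'M[R]_(rdim d n)}.
Context {A : forall n, 'I_d -> 'M[R]_(rdim d n, rdim d n.+1)}.
Context {B : forall n, 'I_d -> 'M[R]_(rdim d n)}.
Context {C : forall n, 'I_d -> 'M[R]_(rdim d n, rdim d n.-1)}.
Hypothesis Pi_unit : forall n, Pi n \in unitmx.

Definition wouter a b (x : d.-tuple R) : 'M[R]_(rdim d a, rdim d b) :=
  w x *: (Pvec P a x *m (Pvec P b x)^T).

Definition wouter_prev a b (x : d.-tuple R) : 'M[R]_(rdim d a.-1, rdim d b) :=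
  w x *: (Pvec_prev P a x *m (Pvec P b x)^T).

Hypothesis P_orth : forall a b, a <> b -> mxint lam Omega (wouter a b) = 0.
Hypothesis P_norm : forall a, mxint lam Omega (wouter a a) = invmx (Pi a).
Hypothesis ttrr : forall n (i : 'I_d) x,
  tnth x i *: Pvec P n x =
    A n i *m Pvec P n.+1 x + B n i *m Pvec P n x + C n i *m Pvec_prev P n x.

Lemma integrable_peval_weight (p : {mpoly R[d]}) :
  lam.-integrable Omega (EFin \o fun x => peval x p * w x).
Proof.
under [fun x => _]funext do rewrite /peval mevalE big_distrl.
apply: integrable_sum_EFin => // m.
apply: (eq_integrable mOmega _ _ _ (integrableZl mOmega p@_m (w_moments (fun i => m i)))).
by move=> x _; rewrite /= -EFinM mulrA.
Qed.

Lemma mx_integrable_wouter a b : mx_integrable lam Omega (wouter a b).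
Proof.
move=> r s.
have -> : (fun x => wouter a b x r s) = fun x => peval x (P a r * P b s) * w x.
  by apply: funext => x; rewrite /peval mevalM !mxE big_ord1 !mxE mulrC.
exact: integrable_peval_weight.
Qed.

Lemma wouter_prev0 b : wouter_prev 0%N b = fun _ => 0.
Proof. by apply: funext => x; rewrite /wouter_prev /= mul0mx scaler0. Qed.

Lemma wouter_prevS a b : wouter_prev a.+1 b = wouter a b.
Proof. by []. Qed.

Lemma mx_integrable_wouter_prev a b : mx_integrable lam Omega (wouter_prev a b).
Proof.
case: a => [|a]; last exact: mx_integrable_wouter.
rewrite wouter_prev0; exact: mx_integrable0.
Qed.

Lemma tr_wouter a b x : (wouter a b x)^T = wouter b a x.
Proof. by rewrite /wouter linearZ /= trmx_mul trmxK. Qed.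

Lemma tr_invmx_Pi a : (invmx (Pi a))^T = invmx (Pi a).
Proof.
by rewrite -P_norm -mxint_tr; under [fun x => _]funext do rewrite tr_wouter.
Qed.

Lemma mxint_x_wouter (i : 'I_d) a b :
  mxint lam Omega (fun x => tnth x i *: wouter a b x) =
    A a i *m mxint lam Omega (wouter a.+1 b) +
    B a i *m mxint lam Omega (wouter a b) +
    C a i *m mxint lam Omega (wouter_prev a b).
Proof.
have -> : (fun x => tnth x i *: wouter a b x) = fun x =>
    A a i *m wouter a.+1 b x + B a i *m wouter a b x + C a i *m wouter_prev a b x.
  apply: funext => x; rewrite /wouter /wouter_prev scalerA mulrC -scalerA.
  by rewrite scalemxAl ttrr !mulmxDl !scalerDr -!mulmxA !scalemxAr.
have intA := mx_integrable_mull mOmega (A a i) (mx_integrable_wouter a.+1 b).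
have intB := mx_integrable_mull mOmega (B a i) (mx_integrable_wouter a b).
have intC := mx_integrable_mull mOmega (C a i) (mx_integrable_wouter_prev a b).
rewrite (mxintD mOmega (mx_integrableD mOmega intA intB) intC) (mxintD mOmega intA intB).
by rewrite !(mxint_mull mOmega _ (mx_integrable_wouter _ _))
  (mxint_mull mOmega _ (mx_integrable_wouter_prev _ _)).
Qed.

Lemma mxint_x_wouter_up (i : 'I_d) a :
  mxint lam Omega (fun x => tnth x i *: wouter a a.+1 x) = A a i *m invmx (Pi a.+1).
Proof.
have prev0 : mxint lam Omega (wouter_prev a a.+1) = 0.
  case: a => [|a]; first by rewrite wouter_prev0 mxint0.
  by rewrite wouter_prevS P_orth //; lia.
by rewrite mxint_x_wouter P_norm P_orth ?prev0 ?mulmx0 ?addr0 //; lia.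
Qed.

Lemma mxint_x_wouter_down (i : 'I_d) a :
  mxint lam Omega (fun x => tnth x i *: wouter a.+1 a x) = C a.+1 i *m invmx (Pi a).
Proof.
rewrite mxint_x_wouter wouter_prevS P_norm !P_orth; try lia.
by rewrite !mulmx0 !add0r.
Qed.

Lemma Pi_mulA n i : Pi n *m A n i = (C n.+1 i)^T *m Pi n.+1.
Proof.
have : A n i *m invmx (Pi n.+1) = invmx (Pi n) *m (C n.+1 i)^T.
  rewrite -mxint_x_wouter_up -tr_invmx_Pi -trmx_mul -mxint_x_wouter_down.
  rewrite -mxint_tr; congr (mxint lam Omega); apply: funext => x.
  by rewrite [RHS]linearZ /= tr_wouter.
move/(congr1 (fun M => Pi n *m M *m Pi n.+1)).
by rewrite /= !mulmxA mulmxKV // mulmxV // mul1mx.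
Qed.

End OrthogonalSystem.

Theorem mainTheorem1 (d : nat) (hd : (0 < d)%N) (R : realType)
  (lam : {measure set (d.-tuple R) -> \bar R}) (Hlam : is_lebesgue_measure lam)
  (Omega : set (d.-tuple R)) (mOmega : measurable Omega)
  (w : d.-tuple R -> R) (w_ge0 : forall x, Omega x -> 0 <= w x)
  (w_moments : forall m : 'I_d -> nat,
     lam.-integrable Omega
       (fun x => ((\prod_(i < d) tnth x i ^+ m i) * w x)%:E))
  (P : forall n, 'I_(rdim d n) -> {mpoly R[d]})
  (P_deg : forall n j, msize (P n j) = n.+1)
  (P_span : forall n (q : {mpoly R[d]}), (msize q <= n.+1)%N ->
     exists (c : 'I_(rdim d n) -> R) (q0 : {mpoly R[d]}),
       (msize q0 <= n)%N /\ q = \sum_(j < rdim d n) c j *: P n j + q0)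
  (Pi : forall n, 'M[R]_(rdim d n))
  (Pi_unit : forall n, Pi n \in unitmx)
  (P_orth : forall i j, i <> j ->
     mxint lam Omega (fun x => w x *: (Pvec P i x *m (Pvec P j x)^T)) = 0)
  (P_norm : forall j,
     mxint lam Omega (fun x => w x *: (Pvec P j x *m (Pvec P j x)^T)) = invmx (Pi j))
  (A : forall n, 'I_d -> 'M[R]_(rdim d n, rdim d n.+1))
  (B : forall n, 'I_d -> 'M[R]_(rdim d n))
  (C : forall n, 'I_d -> 'M[R]_(rdim d n, rdim d n.-1))
  (ttrr : forall n (i : 'I_d) (x : d.-tuple R),
     tnth x i *: Pvec P n x =
       A n i *m Pvec P n.+1 x + B n i *m Pvec P n x + C n i *m Pvec_prev P n x) :
  forall n : nat, (0 < n)%N ->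
    (forall G, left_inverses C G ->
       Pi n = Pi 0 (ord_r0 d) (ord_r0 d) *: GAsum G A n) /\
    (forall G G', left_inverses C G -> left_inverses C G' ->
       GAsum G A n = GAsum G' A n).
Proof.
have PiA := Pi_mulA mOmega w_moments Pi_unit P_orth P_norm ttrr.
have Pi_GAsum G (hG : left_inverses C G) n := Pi_eq_scale_GAsum PiA hG n.
move=> n _; split=> [G hG | G G' hG hG']; first exact: Pi_GAsum.
move: (Pi_GAsum G hG n); rewrite (Pi_GAsum G' hG' n).
by move=> /(scalerI (unitmx_rdim0_entry_neq0 _ (Pi_unit 0))) ->.
Qed.
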